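(* Let $\widetilde{E(2)}$, $\Omega$ and the functions below be as in the context, and let $(c,\theta)\in\Omega$. Define $X=(x_1,x_2,x_3):\mathbb{C}\to\widetilde{E(2)}$ by $$x_3(u+iv)=-\lambda_1\lambda_2Dv+\lambda_1\lambda_2G(u),$$ $$x_1(u+iv)=-\frac{1}{(c^2+\lambda_1^2\lambda_2^2D^2)B}\Big[\tfrac{1}{\lambda_1}f'(u)\cos\varphi(u)M_1-\tfrac{1}{\lambda_1}(c-\varphi'(u))\sin\varphi(u)M_2-\tfrac{1}{\lambda_2}(c-\varphi'(u))\cos\varphi(u)M_3-\tfrac{1}{\lambda_2}f'(u)\sin\varphi(u)M_4\Big],$$ $$x_2(u+iv)=-\frac{1}{(c^2+\lambda_1^2\lambda_2^2D^2)B}\Big[\tfrac{1}{\lambda_1}f'(u)\cos\varphi(u)M_4-\tfrac{1}{\lambda_1}(c-\varphi'(u))\sin\varphi(u)M_3+\tfrac{1}{\lambda_2}(c-\varphi'(u))\cos\varphi(u)M_2+\tfrac{1}{\lambda_2}f'(u)\sin\varphi(u)M_1\Big],$$ where $B=B(u)$, $A=f(u)+cv$, $x_3=x_3(u+iv)$ and $M_1=c\cos x_3\cosh A-\lambda_1\lambda_2D\sin x_3\sinh A$, $M_2=c\cos x_3\sinh A-\lambda_1\lambda_2D\sin x_3\cosh A$, $M_3=c\sin x_3\sinh A+\lambda_1\lambda_2D\cos x_3\cosh A$, $M_4=c\sin x_3\cosh A+\lambda_1\lambda_2D\cos x_3\sinh A$. Then $X$ is a conformal minimal immersion from $\mathbb{C}$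 into $\widetilde{E(2)}$ whose Gauss map (for a suitable choice of unit normal) is $g(u+iv)=e^{f(u)+cv}e^{i\varphi(u)}$.
   Context: $\widetilde{E(2)}$ is $\mathbb{R}^3$ with coordinates $(x_1,x_2,x_3)$ and group law $(a_1,b_1,c_1)*(a_2,b_2,c_2)=(a_1+a_2\cos c_1-b_2\sin c_1,\ b_1+a_2\sin c_1+b_2\cos c_1,\ c_1+c_2)$, with the left-invariant metric $\lambda_1^2(\cos x_3\,dx_1+\sin x_3\,dx_2)^2+\lambda_2^2(-\sin x_3\,dx_1+\cos x_3\,dx_2)^2+\frac{1}{\lambda_1^2\lambda_2^2}dx_3^2$, where either $\lambda_1>\lambda_2>0$ or $\lambda_1=\lambda_2=1$. Its left-invariant orthonormal frame is $E_1=\frac{1}{\lambda_1}(\cos x_3\partial_{x_1}+\sin x_3\partial_{x_2})$, $E_2=\frac{1}{\lambda_2}(-\sin x_3\partial_{x_1}+\cos x_3\partial_{x_2})$, $E_3=\lambda_1\lambda_2\partial_{x_3}$; for an immersed surface with unit normal $N=N_1E_1+N_2E_2+N_3E_3$ the Gauss map is $g=\frac{N_1+iN_2}{1+N_3}$. For $c>0$ set $\theta_c^+=\pi$ if $c>\sqrt2\lambda_1$ and $\theta_c^+=\arccos(1-c^2/\lambda_1^2)\in(0,\pi]$ if $0<c\le\sqrt2\lambda_1$; $\Omega=\{(c,\theta)\in\mathbb{R}^2: c>0,\ \theta\in(-\theta_c^+,\theta_c^+)\}$. For $(c,\theta)\in\Omega$ let $D=\sin\theta/c$, let $\varphi:\mathbb{R}\to\mathbb{R}$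 be the (globally defined) solution of $\varphi'(u)=\sqrt{c^2+2\cos\theta\,B(u)-D^2B(u)^2}$, $\varphi(0)=0$, where $B(u)=\lambda_1^2\cos^2\varphi(u)+\lambda_2^2\sin^2\varphi(u)$; let $f$ be the solution of $f'(u)=DB(u)$, $f(0)=0$; and let $G(u)=\int_0^u\frac{c-\varphi'(s)}{B(s)}\,ds$. *)

From Stdlib Require Import Reals Ratan List.
From Coquelicot Require Import Coquelicot.
Open Scope R_scope.

(** Points / tangent vectors of R^3 in the coordinates (x_1,x_2,x_3) are
    functions [nat -> R]; index 0,1,2 stands for x_1,x_2,x_3. *)
Definition vec3 := nat -> R.
Definition sum3 (F : nat -> R) : R := F 0%nat + F 1%nat + F 2%nat.
Definition mk3 (a b c : R) : vec3 :=
  fun k => match k with 0%nat => a | 1%nat => b | _ => c end.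
Definition upd (x : vec3) (k : nat) (t : R) : vec3 :=
  fun m => if Nat.eqb m k then t else x m.

(** Coefficients of the 1-forms  w1 = cos x3 dx1 + sin x3 dx2,
    w2 = - sin x3 dx1 + cos x3 dx2,  w3 = dx3. *)
Definition om1 (x : vec3) : vec3 := mk3 (cos (x 2%nat)) (sin (x 2%nat)) 0.
Definition om2 (x : vec3) : vec3 := mk3 (- sin (x 2%nat)) (cos (x 2%nat)) 0.
Definition om3 (x : vec3) : vec3 := mk3 0 0 1.

Definition gE2 (l1 l2 : R) (x : vec3) (i j : nat) : R :=
  l1 ^ 2 * om1 x i * om1 x j + l2 ^ 2 * om2 x i * om2 x j
  + / (l1 ^ 2 * l2 ^ 2) * om3 x i * om3 x j.

Definition E1 (l1 l2 : R) (x : vec3) : vec3 :=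
  mk3 (/ l1 * cos (x 2%nat)) (/ l1 * sin (x 2%nat)) 0.
Definition E2 (l1 l2 : R) (x : vec3) : vec3 :=
  mk3 (- (/ l2 * sin (x 2%nat))) (/ l2 * cos (x 2%nat)) 0.
Definition E3 (l1 l2 : R) (x : vec3) : vec3 := mk3 0 0 (l1 * l2).
Definition frame_comb (l1 l2 : R) (x : vec3) (N : vec3) : vec3 :=
  fun k => N 0%nat * E1 l1 l2 x k + N 1%nat * E2 l1 l2 x k + N 2%nat * E3 l1 l2 x k.

Definition metric := vec3 -> nat -> nat -> R.

Definition ip (g : metric) (x a b : vec3) : R :=
  sum3 (fun i => sum3 (fun j => g x i j * a i * b j)).

Definition dmetric (g : metric) (x : vec3) (k i j : nat) : R :=
  Derive (fun t => g (upd x k t) i j) (x k).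

(** Christoffel symbols of the first kind  Gamma_{ij,l} = g(nabla_{d_i} d_j, d_l) *)
Definition christ1 (g : metric) (x : vec3) (i j l : nat) : R :=
  / 2 * (dmetric g x i j l + dmetric g x j i l - dmetric g x l i j).

Definition surf := R -> R -> vec3.

Definition pu (h : R -> R -> R) : R -> R -> R := fun u v => Derive (fun t => h t v) u.
Definition pv (h : R -> R -> R) : R -> R -> R := fun u v => Derive (fun t => h u t) v.

Definition comp (X : surf) (k : nat) : R -> R -> R := fun u v => X u v k.
Definition Xu (X : surf) (u v : R) : vec3 := fun k => pu (comp X k) u v.
Definition Xv (X : surf) (u v : R) : vec3 := fun k => pv (comp X k) u v.
Definition Xuu (X : surf) (u v : R) : vec3 := fun k => pu (pu (comp X k)) u v.
Definition Xuv (X : surf) (u v : R) : vec3 := fun k => pv (pu (comp X k)) u v.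
Definition Xvv (X : surf) (u v : R) : vec3 := fun k => pv (pv (comp X k)) u v.

Fixpoint iterp (w : list bool) (h : R -> R -> R) : R -> R -> R :=
  match w with
  | nil => h
  | b :: w' => (if b then pu else pv) (iterp w' h)
  end.
Definition smooth2 (h : R -> R -> R) : Prop :=
  forall (w : list bool) (u v : R),
    ex_derive (fun t => iterp w h t v) u /\
    ex_derive (fun t => iterp w h u t) v /\
    continuous (fun p : R * R => iterp w h (fst p) (snd p)) (u, v).

Definition immersion (X : surf) : Prop :=
  (forall k, (k < 3)%nat -> smooth2 (comp X k)) /\
  forall u v a b, (forall k, (k < 3)%nat -> a * Xu X u v k + b * Xv X u v k = 0) ->
    a = 0 /\ b = 0.

Definition EE (g : metric) X u v := ip g (X u v) (Xu X u v) (Xu X u v).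
Definition FF (g : metric) X u v := ip g (X u v) (Xu X u v) (Xv X u v).
Definition GG (g : metric) X u v := ip g (X u v) (Xv X u v) (Xv X u v).

Definition conformal (g : metric) (X : surf) : Prop :=
  forall u v, EE g X u v = GG g X u v /\ FF g X u v = 0.

Definition unit_normal (g : metric) (X : surf) (u v : R) (n : vec3) : Prop :=
  ip g (X u v) n n = 1 /\ ip g (X u v) n (Xu X u v) = 0 /\ ip g (X u v) n (Xv X u v) = 0.

(** g(nabla_{X_s} X_t, n), where S = d^2 X / ds dt, Ys = X_s, Yt = X_t :
    (nabla_{X_s} X_t)^k = S^k + Gamma^k_{ij} Ys^i Yt^j. *)
Definition cov_pair (g : metric) (x S Ys Yt n : vec3) : R :=
  ip g x S n +
  sum3 (fun i => sum3 (fun j => sum3 (fun l => christ1 g x i j l * Ys i * Yt j * n l))).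

Definition IIe g X u v n := cov_pair g (X u v) (Xuu X u v) (Xu X u v) (Xu X u v) n.
Definition IIf g X u v n := cov_pair g (X u v) (Xuv X u v) (Xu X u v) (Xv X u v) n.
Definition IIg g X u v n := cov_pair g (X u v) (Xvv X u v) (Xv X u v) (Xv X u v) n.

Definition mean_curv (g : metric) (X : surf) (u v : R) (n : vec3) : R :=
  (IIe g X u v n * GG g X u v - 2 * IIf g X u v n * FF g X u v + IIg g X u v n * EE g X u v)
  / (2 * (EE g X u v * GG g X u v - FF g X u v ^ 2)).

Definition minimal (g : metric) (X : surf) : Prop :=
  forall u v n, unit_normal g X u v n -> mean_curv g X u v n = 0.

Definition theta_plus (l1 c : R) : R :=
  if Rlt_dec (sqrt 2 * l1) c then PI else acos (1 - c ^ 2 / l1 ^ 2).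

Definition in_Omega (l1 c th : R) : Prop :=
  0 < c /\ - theta_plus l1 c < th < theta_plus l1 c.

Definition DD (c th : R) : R := sin th / c.

Definition BB (l1 l2 : R) (phi : R -> R) (u : R) : R :=
  l1 ^ 2 * cos (phi u) ^ 2 + l2 ^ 2 * sin (phi u) ^ 2.

Definition GGf (l1 l2 c : R) (phi : R -> R) (u : R) : R :=
  RInt (fun s => (c - Derive phi s) / BB l1 l2 phi s) 0 u.

Definition Xsurf (l1 l2 c th : R) (phi f : R -> R) : surf :=
  fun u v =>
  let D := DD c th in
  let K := l1 * l2 in
  let B := BB l1 l2 phi u in
  let x3 := - K * D * v + K * GGf l1 l2 c phi u in
  let A := f u + c * v in
  let M1 := c * cos x3 * cosh A - K * D * sin x3 * sinh A in
  let M2 := c * cos x3 * sinh A - K * D * sin x3 * cosh A in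
  let M3 := c * sin x3 * sinh A + K * D * cos x3 * cosh A in
  let M4 := c * sin x3 * cosh A + K * D * cos x3 * sinh A in
  let f' := Derive f u in
  let p' := Derive phi u in
  let pref := - / ((c ^ 2 + K ^ 2 * D ^ 2) * B) in
  let x1 := pref *
     (/ l1 * f' * cos (phi u) * M1 - / l1 * (c - p') * sin (phi u) * M2
      - / l2 * (c - p') * cos (phi u) * M3 - / l2 * f' * sin (phi u) * M4) in
  let x2 := pref *
     (/ l1 * f' * cos (phi u) * M4 - / l1 * (c - p') * sin (phi u) * M3
      + / l2 * (c - p') * cos (phi u) * M2 + / l2 * f' * sin (phi u) * M1) in
  mk3 x1 x2 x3.

(* Put A = f u + c v and s = G' = (c - phi') / B.  Then phi' = c - s B, the ODE for phi
   becomes the polynomial relation s^2 B + D^2 B - 2 c s = 2 cos th, and differentiating it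
   gives s' = (l2^2 - l1^2) sin phi cos phi (s^2 + D^2).  The horizontal coordinates of X are
   those of a pair W = (W1, W2) rotated by the height x3 = l1 l2 (G u - D v), and in the
   left-invariant frame X_u = a1 E1 + a2 E2 + s E3 and X_v = b1 E1 + b2 E2 - D E3, with
   coefficients linear in cosh A and sinh A.  Hence |X_u|^2 = |X_v|^2 = cosh^2 A (D^2 + s^2) > 0
   and <X_u, X_v> = 0, so X is a conformal immersion.  Expressing the Levi-Civita connection
   in the frame, nabla_u X_u + nabla_v X_v = 0: X is harmonic, hence minimal.  The unit normal
   with frame coordinates (cos phi, sin phi, - sinh A) / cosh A has Gauss map e^A e^(i phi).
   Smoothness holds because every coordinate lies in the algebra generated by v, phi, f, G and
   s under ring operations, sin, cos and exp, which is closed under partial derivatives. *)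

From Pilot Require Import Defs.
From Stdlib Require Import Reals Ratan List Lra FunctionalExtensionality.
From Coquelicot Require Import Coquelicot.
Open Scope R_scope.

Lemma unit_circle_rational (x y : R) : x ^ 2 + y ^ 2 = 1 ->
  exists p q, p ^ 2 + q ^ 2 <> 0 /\
    x = (p ^ 2 - q ^ 2) / (p ^ 2 + q ^ 2) /\ y = 2 * p * q / (p ^ 2 + q ^ 2).
Proof.
  intros Hxy. destruct (Req_dec x (-1)) as [Hx | Hx].
  - subst x. assert (y = 0) by nra. subst y.
    exists 0, 1. split; [lra | split; field].
  - exists (1 + x), y.
    assert (Hd : (1 + x) ^ 2 + y ^ 2 = 2 * (1 + x)) by nra.
    rewrite Hd. split; [lra | split].
    + replace ((1 + x) ^ 2 - y ^ 2) with (2 * x * (1 + x)) by nra. field. lra.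
    + field. lra.
Qed.

Lemma cos_sin_sq (t : R) : cos t ^ 2 + sin t ^ 2 = 1.
Proof. rewrite <- (sin2_cos2 t). unfold Rsqr. ring. Qed.

(* [field] cannot use [cos t ^ 2 + sin t ^ 2 = 1]; substituting the rational
   parametrization of the circle turns such identities into rational ones. *)
Ltac rationalize_angle t :=
  let H := fresh in
  pose proof (cos_sin_sq t) as H;
  let x := fresh in let y := fresh in
  set (x := cos t) in *; set (y := sin t) in *; clearbody x y;
  let p := fresh "p" in let q := fresh "q" in let Hpq := fresh "Hpq" in
  let Ex := fresh in let Ey := fresh in
  destruct (unit_circle_rational x y H) as (p & q & Hpq & Ex & Ey); subst x y; clear H.

Ltac nonzero :=
  repeat split;
  repeat first [ assumption | apply Rgt_not_eq; assumption
               | apply Rmult_integral_contrapositive_currified | apply pow_nonzero ];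
  nra.

Lemma Cdiv_polar (x y z r cp sp : R) : z <> 0 -> x = z * r * cp -> y = z * r * sp ->
  ((RtoC x + RtoC y * Ci) / RtoC z = RtoC r * (RtoC cp + RtoC sp * Ci))%C.
Proof.
  intros Hz -> ->.
  unfold Cdiv, Cmult, Cinv, Cplus, RtoC, Ci. simpl.
  f_equal; field; auto.
Qed.

Lemma orthogonal_independent (y1 y2 y3 z1 z2 z3 al be : R) :
  0 < y1 * y1 + y2 * y2 + y3 * y3 ->
  y1 * y1 + y2 * y2 + y3 * y3 = z1 * z1 + z2 * z2 + z3 * z3 ->
  y1 * z1 + y2 * z2 + y3 * z3 = 0 ->
  al * y1 + be * z1 = 0 -> al * y2 + be * z2 = 0 -> al * y3 + be * z3 = 0 ->
  al = 0 /\ be = 0.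
Proof.
  intros Hy Hyz Hdot H1 H2 H3.
  assert (Ha : al * (y1 * y1 + y2 * y2 + y3 * y3) = 0).
  { transitivity (y1 * (al * y1 + be * z1) + y2 * (al * y2 + be * z2) + y3 * (al * y3 + be * z3)
                  - be * (y1 * z1 + y2 * z2 + y3 * z3)); [ring | rewrite H1, H2, H3, Hdot; ring]. }
  assert (Hb : be * (z1 * z1 + z2 * z2 + z3 * z3) = 0).
  { transitivity (z1 * (al * y1 + be * z1) + z2 * (al * y2 + be * z2) + z3 * (al * y3 + be * z3)
                  - al * (y1 * z1 + y2 * z2 + y3 * z3)); [ring | rewrite H1, H2, H3, Hdot; ring]. }
  rewrite <- Hyz in Hb.
  split; [destruct (Rmult_integral _ _ Ha) | destruct (Rmult_integral _ _ Hb)]; auto; lra.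
Qed.

Lemma cosh_pos x : 0 < cosh x.
Proof. unfold cosh. pose proof (exp_pos x). pose proof (exp_pos (- x)). lra. Qed.

(* [auto_derive] leaves eta-expanded terms [Derive (fun x => g x) y] for the
   functions [g] it does not know; [rewrite_Derive g H] replaces them using
   [H : is_derive g y _] or [H : forall y, is_derive g y _].  The match is
   syntactic: unifying [F] with a defined function may unfold it at great cost. *)
Ltac rewrite_Derive g H :=
  repeat match goal with
  | |- context [Derive ?F ?y] =>
      constr_eq F (fun x : R => g x);
      first [ rewrite (is_derive_unique F y _ (H y)) | rewrite (is_derive_unique F y _ H) ]
  end.

Lemma ex_derive_sin x : ex_derive sin x.
Proof. eexists. apply is_derive_sin. Qed.
Lemma ex_derive_cos x : ex_derive cos x.
Proof. eexists. apply is_derive_cos. Qed.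
Lemma ex_derive_exp x : ex_derive exp x.
Proof. eexists. apply is_derive_exp. Qed.

Lemma continuous_comp_R (F : R -> R) (h : R * R -> R) (p : R * R) :
  (forall y, ex_derive F y) -> continuous h p -> continuous (fun q => F (h q)) p.
Proof.
  intros HF Hh. apply (continuous_comp h F); [exact Hh |].
  apply (ex_derive_continuous (V := R_NormedModule)), HF.
Qed.

Lemma Derive_comp_R (F F' g : R -> R) x :
  (forall y, is_derive F y (F' y)) -> ex_derive g x ->
  Derive (fun t => F (g t)) x = Derive g x * F' (g x).
Proof.
  intros HF Hg. apply is_derive_unique, (is_derive_comp F g); [apply HF | apply Derive_correct, Hg].
Qed.

(** * Smooth functions generated by finitely many functions of one variable *)

Section GeneratedSmooth.

Variable leaf : (R -> R) -> Prop.

Inductive gen_smooth : (R -> R -> R) -> Prop :=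
| gen_const a : gen_smooth (fun _ _ => a)
| gen_snd : gen_smooth (fun _ v => v)
| gen_leaf g : leaf g -> gen_smooth (fun u _ => g u)
| gen_plus h k : gen_smooth h -> gen_smooth k -> gen_smooth (fun u v => h u v + k u v)
| gen_mult h k : gen_smooth h -> gen_smooth k -> gen_smooth (fun u v => h u v * k u v)
| gen_opp h : gen_smooth h -> gen_smooth (fun u v => - h u v)
| gen_sin h : gen_smooth h -> gen_smooth (fun u v => sin (h u v))
| gen_cos h : gen_smooth h -> gen_smooth (fun u v => cos (h u v))
| gen_exp h : gen_smooth h -> gen_smooth (fun u v => exp (h u v)).

Hypothesis leaf_derive : forall g, leaf g ->
  exists g', (forall u, is_derive g u (g' u)) /\ gen_smooth (fun u _ => g' u).

Lemma gen_smooth_pow h n : gen_smooth h -> gen_smooth (fun u v => h u v ^ n).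
Proof.
  intros Hh. induction n as [|n IH].
  - exact (gen_const 1).
  - exact (gen_mult _ _ Hh IH).
Qed.

Lemma gen_smooth_ext h k : (forall u v, h u v = k u v) -> gen_smooth h -> gen_smooth k.
Proof.
  intros Hhk. replace k with h; [trivial |].
  apply functional_extensionality; intro u. apply functional_extensionality; intro v. apply Hhk.
Qed.

Lemma gen_smooth_derivable h : gen_smooth h ->
  forall u v, ex_derive (fun t => h t v) u /\ ex_derive (fun t => h u t) v.
Proof.
  induction 1 as [a | | g Hg | h k _ IHh _ IHk | h k _ IHh _ IHk
                  | h _ IH | h _ IH | h _ IH | h _ IH];
    intros u v.
  - split; apply ex_derive_const.
  - split; [apply ex_derive_const | apply ex_derive_id].
  - destruct (leaf_derive g Hg) as (g' & Hg' & _).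
    split; [exists (g' u); apply Hg' | apply ex_derive_const].
  - destruct (IHh u v), (IHk u v).
    split; [apply (ex_derive_plus (fun t => h t v) (fun t => k t v))
           | apply (ex_derive_plus (fun t => h u t) (fun t => k u t))]; assumption.
  - destruct (IHh u v), (IHk u v).
    split; [apply (ex_derive_mult (fun t => h t v) (fun t => k t v))
           | apply (ex_derive_mult (fun t => h u t) (fun t => k u t))]; assumption.
  - destruct (IH u v).
    split; [apply (ex_derive_opp (fun t => h t v)) | apply (ex_derive_opp (fun t => h u t))];
      assumption.
  - destruct (IH u v). split; apply ex_derive_comp; auto using ex_derive_sin.
  - destruct (IH u v). split; apply ex_derive_comp; auto using ex_derive_cos.
  - destruct (IH u v). split; apply ex_derive_comp; auto using ex_derive_exp.
Qed.

Lemma gen_smooth_continuous h : gen_smooth h ->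
  forall u v, continuous (fun p : R * R => h (fst p) (snd p)) (u, v).
Proof.
  induction 1 as [a | | g Hg | h k _ IHh _ IHk | h k _ IHh _ IHk
                  | h _ IH | h _ IH | h _ IH | h _ IH];
    intros u v.
  - apply continuous_const.
  - apply continuous_snd.
  - destruct (leaf_derive g Hg) as (g' & Hg' & _).
    apply (continuous_comp_R g fst); [intro y; exists (g' y); apply Hg' | apply continuous_fst].
  - apply (continuous_plus (fun p : R * R => h (fst p) (snd p))); auto.
  - apply (continuous_mult (fun p : R * R => h (fst p) (snd p))); auto.
  - apply (continuous_opp (fun p : R * R => h (fst p) (snd p))); auto.
  - apply continuous_comp_R; auto using ex_derive_sin.
  - apply continuous_comp_R; auto using ex_derive_cos.
  - apply continuous_comp_R; auto using ex_derive_exp.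
Qed.

Lemma gen_smooth_partials_comp (F F' : R -> R) h :
  (forall y, is_derive F y (F' y)) -> gen_smooth h -> gen_smooth (pu h) -> gen_smooth (pv h) ->
  gen_smooth (fun u v => F' (h u v)) ->
  gen_smooth (pu (fun u v => F (h u v))) /\ gen_smooth (pv (fun u v => F (h u v))).
Proof.
  intros HF Hh Hu Hv HF'. unfold pu, pv.
  split; [apply (gen_smooth_ext (fun u v => pu h u v * F' (h u v)))
         | apply (gen_smooth_ext (fun u v => pv h u v * F' (h u v)))];
    auto using gen_mult; intros u v; destruct (gen_smooth_derivable h Hh u v);
    symmetry; rewrite (Derive_comp_R F F'); auto.
Qed.

Lemma gen_smooth_partials h : gen_smooth h -> gen_smooth (pu h) /\ gen_smooth (pv h).
Proof.
  induction 1 as [a | | g Hg | h k Hh [] Hk [] | h k Hh [] Hk []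
                  | h Hh [] | h Hh [] | h Hh [] | h Hh []];
    unfold pu, pv.
  - split; apply (gen_smooth_ext (fun _ _ => 0)); auto using gen_const;
      intros; symmetry; apply Derive_const.
  - split; [apply (gen_smooth_ext (fun _ _ => 0)) | apply (gen_smooth_ext (fun _ _ => 1))];
      auto using gen_const; intros; symmetry; [apply Derive_const | apply Derive_id].
  - destruct (leaf_derive g Hg) as (g' & Hg' & Sg').
    split; [apply (gen_smooth_ext (fun u _ => g' u)) | apply (gen_smooth_ext (fun _ _ => 0))];
      auto using gen_const; intros; symmetry; [apply is_derive_unique, Hg' | apply Derive_const].
  - split; [apply (gen_smooth_ext (fun u v => pu h u v + pu k u v))
           | apply (gen_smooth_ext (fun u v => pv h u v + pv k u v))];
      auto using gen_plus; intros u v;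
      destruct (gen_smooth_derivable h Hh u v), (gen_smooth_derivable k Hk u v);
      symmetry; apply Derive_plus; assumption.
  - split; [apply (gen_smooth_ext (fun u v => pu h u v * k u v + h u v * pu k u v))
           | apply (gen_smooth_ext (fun u v => pv h u v * k u v + h u v * pv k u v))];
      auto using gen_plus, gen_mult; intros u v;
      destruct (gen_smooth_derivable h Hh u v), (gen_smooth_derivable k Hk u v);
      symmetry; apply Derive_mult; assumption.
  - split; [apply (gen_smooth_ext (fun u v => - pu h u v))
           | apply (gen_smooth_ext (fun u v => - pv h u v))];
      auto using gen_opp; intros u v; symmetry; apply Derive_opp.
  - apply (gen_smooth_partials_comp sin cos); auto using is_derive_sin, gen_cos.
  - apply (gen_smooth_partials_comp cos (fun y => - sin y));
      auto using is_derive_cos, gen_opp, gen_sin.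
  - apply (gen_smooth_partials_comp exp exp); auto using is_derive_exp, gen_exp.
Qed.

Lemma gen_smooth_smooth2 h : gen_smooth h -> smooth2 h.
Proof.
  intros Hh w. assert (Hw : gen_smooth (iterp w h)).
  { induction w as [|[|] w IH]; simpl; [exact Hh | apply (gen_smooth_partials _ IH) ..]. }
  intros u v. destruct (gen_smooth_derivable _ Hw u v).
  repeat split; auto using gen_smooth_continuous.
Qed.

End GeneratedSmooth.

(** * Surfaces in the left-invariant frame of E(2) *)

Lemma Xu_of_is_derive (X : surf) (u v : R) (V : vec3) :
  (forall k, is_derive (fun t => X t v k) u (V k)) -> Xu X u v = V.
Proof.
  intros H. apply functional_extensionality; intro k. apply is_derive_unique, H.
Qed.

Lemma Xv_of_is_derive (X : surf) (u v : R) (V : vec3) :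
  (forall k, is_derive (fun t => X u t k) v (V k)) -> Xv X u v = V.
Proof.
  intros H. apply functional_extensionality; intro k. apply is_derive_unique, H.
Qed.

Lemma mean_curv_harmonic (g : metric) (X : surf) (u v : R) (n : vec3) :
  EE g X u v = GG g X u v -> FF g X u v = 0 ->
  IIe g X u v n + IIg g X u v n = 0 -> mean_curv g X u v n = 0.
Proof.
  intros HEG HF Htau. unfold mean_curv. rewrite <- HEG, HF.
  replace (IIe g X u v n * EE g X u v - 2 * IIf g X u v n * 0 + IIg g X u v n * EE g X u v)
    with ((IIe g X u v n + IIg g X u v n) * EE g X u v) by ring.
  rewrite Htau. unfold Rdiv. ring.
Qed.

Definition twist (t w1 w2 : R) : vec3 :=
  mk3 (cos t * w1 - sin t * w2) (sin t * w1 + cos t * w2) t.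

Section LeftInvariantFrame.

Variables l1 l2 : R.
Hypothesis l1_pos : 0 < l1.
Hypothesis l2_pos : 0 < l2.

Definition frame_vec (t w1 w2 w3 : R) : vec3 :=
  mk3 (cos t * w1 / l1 - sin t * w2 / l2) (sin t * w1 / l1 + cos t * w2 / l2) (l1 * l2 * w3).

Definition frame_coord1 (x Y : vec3) : R :=
  l1 * (cos (x 2%nat) * Y 0%nat + sin (x 2%nat) * Y 1%nat).
Definition frame_coord2 (x Y : vec3) : R :=
  l2 * (- sin (x 2%nat) * Y 0%nat + cos (x 2%nat) * Y 1%nat).
Definition frame_coord3 (x Y : vec3) : R := Y 2%nat / (l1 * l2).

Lemma ip_gE2_frame x Y Z :
  ip (gE2 l1 l2) x Y Z = frame_coord1 x Y * frame_coord1 x Z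
    + frame_coord2 x Y * frame_coord2 x Z + frame_coord3 x Y * frame_coord3 x Z.
Proof.
  unfold ip, sum3, gE2, om1, om2, om3, mk3, frame_coord1, frame_coord2, frame_coord3.
  field. nonzero.
Qed.

Lemma frame_coords_frame_vec x w1 w2 w3 :
  frame_coord1 x (frame_vec (x 2%nat) w1 w2 w3) = w1 /\
  frame_coord2 x (frame_vec (x 2%nat) w1 w2 w3) = w2 /\
  frame_coord3 x (frame_vec (x 2%nat) w1 w2 w3) = w3.
Proof.
  unfold frame_coord1, frame_coord2, frame_coord3, frame_vec, mk3.
  rationalize_angle (x 2%nat). repeat split; field; nonzero.
Qed.

Lemma ip_frame_vec x a1 a2 a3 b1 b2 b3 :
  ip (gE2 l1 l2) x (frame_vec (x 2%nat) a1 a2 a3) (frame_vec (x 2%nat) b1 b2 b3)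
  = a1 * b1 + a2 * b2 + a3 * b3.
Proof.
  rewrite ip_gE2_frame.
  destruct (frame_coords_frame_vec x a1 a2 a3) as (-> & -> & ->).
  destruct (frame_coords_frame_vec x b1 b2 b3) as (-> & -> & ->).
  reflexivity.
Qed.

Lemma frame_comb_frame_vec x N :
  frame_comb l1 l2 x N = frame_vec (x 2%nat) (N 0%nat) (N 1%nat) (N 2%nat).
Proof.
  apply functional_extensionality; intros [|[|k]];
    unfold frame_comb, E1, E2, E3, frame_vec, mk3; simpl; field; nonzero.
Qed.

Lemma is_derive_twist (t W1 W2 : R -> R) s dt dW1 dW2 :
  is_derive t s dt -> is_derive W1 s dW1 -> is_derive W2 s dW2 ->
  forall k, is_derive (fun r => twist (t r) (W1 r) (W2 r) k) s
    (frame_vec (t s) (l1 * (dW1 - dt * W2 s)) (l2 * (dW2 + dt * W1 s)) (dt / (l1 * l2)) k).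
Proof.
  intros Ht H1 H2 [|[|k]]; unfold twist, frame_vec, mk3; auto_derive;
    try (repeat split; eexists; eassumption);
    rewrite_Derive t Ht; rewrite_Derive W1 H1; rewrite_Derive W2 H2;
    field; nonzero.
Qed.

Definition frame_accel (t w1 w2 d1 d2 d3 dt : R) : vec3 :=
  mk3 (cos t * d1 / l1 - sin t * d2 / l2 - dt * (sin t * w1 / l1 + cos t * w2 / l2))
      (sin t * d1 / l1 + cos t * d2 / l2 + dt * (cos t * w1 / l1 - sin t * w2 / l2))
      (l1 * l2 * d3).

Lemma is_derive_frame_vec (t w1 w2 w3 : R -> R) s dt d1 d2 d3 :
  is_derive t s dt -> is_derive w1 s d1 -> is_derive w2 s d2 -> is_derive w3 s d3 ->
  forall k, is_derive (fun r => frame_vec (t r) (w1 r) (w2 r) (w3 r) k) s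
    (frame_accel (t s) (w1 s) (w2 s) d1 d2 d3 dt k).
Proof.
  intros Ht H1 H2 H3 [|[|k]]; unfold frame_vec, frame_accel, mk3; auto_derive;
    try (repeat split; eexists; eassumption);
    rewrite_Derive t Ht; rewrite_Derive w1 H1; rewrite_Derive w2 H2; rewrite_Derive w3 H3;
    field; nonzero.
Qed.

Lemma dmetric_gE2 x k i j :
  dmetric (gE2 l1 l2) x k i j =
  if Nat.eqb k 2 then (l1 ^ 2 - l2 ^ 2) * (om1 x i * om2 x j + om2 x i * om1 x j) else 0.
Proof.
  unfold dmetric. apply is_derive_unique.
  destruct (Nat.eqb_spec k 2) as [-> | Hk].
  - unfold gE2, om1, om2, om3, upd, mk3; simpl.
    destruct i as [|[|i]], j as [|[|j]]; auto_derive; auto; ring.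
  - apply (is_derive_ext (fun _ => gE2 l1 l2 x i j)); [| apply (is_derive_const (gE2 l1 l2 x i j))].
    intros t. unfold gE2, om1, om2, om3, upd.
    replace (Nat.eqb 2 k) with false by (symmetry; apply Nat.eqb_neq; auto). reflexivity.
Qed.

(* For [A = a1 E1 + a2 E2 + a3 E3] and [B = b1 E1 + b2 E2 + b3 E3] with constant
   coefficients, [nabla_A B] has frame coordinates [conn1 a b], [conn2 a b], [conn3 a b]. *)
Definition conn1 (a1 a2 a3 b1 b2 b3 : R) : R :=
  - ((l2 ^ 2 - l1 ^ 2) / 2) * a2 * b3 - ((l1 ^ 2 + l2 ^ 2) / 2) * a3 * b2.
Definition conn2 (a1 a2 a3 b1 b2 b3 : R) : R :=
  - ((l2 ^ 2 - l1 ^ 2) / 2) * a1 * b3 + ((l1 ^ 2 + l2 ^ 2) / 2) * a3 * b1.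
Definition conn3 (a1 a2 a3 b1 b2 b3 : R) : R :=
  ((l2 ^ 2 - l1 ^ 2) / 2) * (a1 * b2 + a2 * b1).

Lemma cov_pair_frame x a1 a2 a3 b1 b2 b3 d1 d2 d3 n :
  cov_pair (gE2 l1 l2) x (frame_accel (x 2%nat) b1 b2 d1 d2 d3 (l1 * l2 * a3))
    (frame_vec (x 2%nat) a1 a2 a3) (frame_vec (x 2%nat) b1 b2 b3) n =
  (d1 + conn1 a1 a2 a3 b1 b2 b3) * frame_coord1 x n
  + (d2 + conn2 a1 a2 a3 b1 b2 b3) * frame_coord2 x n
  + (d3 + conn3 a1 a2 a3 b1 b2 b3) * frame_coord3 x n.
Proof.
  unfold cov_pair. rewrite ip_gE2_frame.
  unfold sum3, christ1. rewrite !dmetric_gE2. simpl Nat.eqb. cbv iota.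
  unfold frame_accel, frame_vec, frame_coord1, frame_coord2, frame_coord3,
    conn1, conn2, conn3, om1, om2, mk3.
  cbv beta iota.
  generalize (n 0%nat) (n 1%nat) (n 2%nat). intros n0 n1 n2.
  rationalize_angle (x 2%nat). field. nonzero.
Qed.

Lemma conformal_immersive (X : surf) u v al be :
  0 < EE (gE2 l1 l2) X u v -> EE (gE2 l1 l2) X u v = GG (gE2 l1 l2) X u v ->
  FF (gE2 l1 l2) X u v = 0 ->
  (forall k, (k < 3)%nat -> al * Xu X u v k + be * Xv X u v k = 0) -> al = 0 /\ be = 0.
Proof.
  unfold EE, GG, FF. rewrite !ip_gE2_frame. intros HE HEG HF H.
  assert (H0 := H 0%nat ltac:(auto)). assert (H1 := H 1%nat ltac:(auto)).
  assert (H2 := H 2%nat ltac:(auto)).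
  apply (orthogonal_independent _ _ _ _ _ _ al be HE HEG HF);
    unfold frame_coord1, frame_coord2, frame_coord3.
  - transitivity (l1 * (cos (X u v 2%nat) * (al * Xu X u v 0%nat + be * Xv X u v 0%nat)
                        + sin (X u v 2%nat) * (al * Xu X u v 1%nat + be * Xv X u v 1%nat)));
      [ring | rewrite H0, H1; ring].
  - transitivity (l2 * (- sin (X u v 2%nat) * (al * Xu X u v 0%nat + be * Xv X u v 0%nat)
                        + cos (X u v 2%nat) * (al * Xu X u v 1%nat + be * Xv X u v 1%nat)));
      [ring | rewrite H0, H1; ring].
  - transitivity ((al * Xu X u v 2%nat + be * Xv X u v 2%nat) / (l1 * l2));
      [field; nonzero | rewrite H2; unfold Rdiv; ring].
Qed.

End LeftInvariantFrame.

(** * The minimal surfaces of the theorem *)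

Lemma radicand_pos (B c th : R) : 0 < c -> 0 < B -> B * (1 - cos th) < c ^ 2 ->
  0 < c ^ 2 + 2 * cos th * B - DD c th ^ 2 * B ^ 2.
Proof.
  intros Hc HB Hth. pose proof (COS_bound th).
  assert (Hfac : c ^ 2 * (c ^ 2 + 2 * cos th * B - DD c th ^ 2 * B ^ 2)
                 = (c ^ 2 + cos th * B - B) * (c ^ 2 + cos th * B + B)).
  { unfold DD. replace ((sin th / c) ^ 2) with (sin th ^ 2 / c ^ 2) by (field; lra).
    replace (sin th ^ 2) with (1 - cos th ^ 2) by (pose proof (cos_sin_sq th); lra).
    field. lra. }
  assert (0 < (c ^ 2 + cos th * B - B) * (c ^ 2 + cos th * B + B)) by nra.
  nra.
Qed.

Lemma in_Omega_cos_bound (l1 c th : R) : 0 < l1 -> in_Omega l1 c th ->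
  l1 ^ 2 * (1 - cos th) < c ^ 2.
Proof.
  intros Hl [Hc Hth]. unfold theta_plus in Hth.
  pose proof (sqrt_pos 2). pose proof (sqrt_sqrt 2 ltac:(lra)).
  pose proof (COS_bound th).
  destruct (Rlt_dec (sqrt 2 * l1) c) as [Hlt | Hge].
  - assert (2 * l1 ^ 2 < c ^ 2).
    { replace (2 * l1 ^ 2) with ((sqrt 2 * l1) * (sqrt 2 * l1)) by nra.
      assert (0 <= sqrt 2 * l1) by nra. nra. }
    nra.
  - apply Rnot_lt_le in Hge.
    set (y := 1 - c ^ 2 / l1 ^ 2) in *.
    assert (Hcy : c ^ 2 = l1 ^ 2 * (1 - y)) by (unfold y; field; lra).
    assert (c ^ 2 <= 2 * l1 ^ 2).
    { replace (2 * l1 ^ 2) with ((sqrt 2 * l1) * (sqrt 2 * l1)) by nra. nra. }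
    assert (0 < l1 ^ 2) by nra.
    assert (Hy : -1 <= y <= 1) by (split; nra).
    pose proof (acos_bound y).
    assert (Hcos : cos (acos y) < cos th).
    { destruct (Rle_lt_dec 0 th); [| rewrite <- (cos_neg th)]; apply cos_decreasing_1; lra. }
    rewrite cos_acos in Hcos by exact Hy.
    nra.
Qed.

Section Surface.

Variables l1 l2 c th : R.
Variables phi f : R -> R.
Hypothesis l2_pos : 0 < l2.
Hypothesis l2_le_l1 : l2 <= l1.
Hypothesis c_pos : 0 < c.
Hypothesis c_large : l1 ^ 2 * (1 - cos th) < c ^ 2.
Hypothesis phi_ode : forall u, is_derive phi u
  (sqrt (c ^ 2 + 2 * cos th * BB l1 l2 phi u - DD c th ^ 2 * BB l1 l2 phi u ^ 2)).
Hypothesis f_ode : forall u, is_derive f u (DD c th * BB l1 l2 phi u).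

Local Notation D := (DD c th).
Local Notation K := (l1 * l2).
Local Notation B u := (BB l1 l2 phi u).
Local Notation G := (GGf l1 l2 c phi).
Local Notation Lam := (c ^ 2 + K ^ 2 * D ^ 2).

Lemma l1_pos : 0 < l1.
Proof. lra. Qed.

Lemma B_bounds u : l2 ^ 2 <= B u <= l1 ^ 2.
Proof.
  unfold BB. pose proof (cos_sin_sq (phi u)).
  assert (l2 ^ 2 <= l1 ^ 2) by nra. split; nra.
Qed.

Lemma B_pos u : 0 < B u.
Proof. pose proof (B_bounds u). nra. Qed.

Lemma Lam_pos : 0 < Lam.
Proof. nra. Qed.

Lemma radicand_B_pos u : 0 < c ^ 2 + 2 * cos th * B u - D ^ 2 * B u ^ 2.
Proof.
  apply radicand_pos; [lra | apply B_pos |].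
  pose proof (B_bounds u). pose proof (COS_bound th). nra.
Qed.

Lemma Derive_phi_sq u :
  Derive phi u ^ 2 = c ^ 2 + 2 * cos th * B u - D ^ 2 * B u ^ 2.
Proof.
  rewrite (is_derive_unique _ _ _ (phi_ode u)), <- Rsqr_pow2.
  apply Rsqr_sqrt, Rlt_le, radicand_B_pos.
Qed.

Lemma Derive_phi_pos u : 0 < Derive phi u.
Proof.
  rewrite (is_derive_unique _ _ _ (phi_ode u)). apply sqrt_lt_R0, radicand_B_pos.
Qed.

(* [slope] is the integrand of [G]; writing [Derive phi] as [c - slope * B] trades
   the square root for the polynomial relation [slope_quadratic]. *)
Definition slope (u : R) : R := (c - Derive phi u) / B u.

Lemma Derive_phi_slope u : Derive phi u = c - slope u * B u.
Proof. unfold slope. field. apply Rgt_not_eq, B_pos. Qed.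

Lemma is_derive_phi u : is_derive phi u (c - slope u * B u).
Proof. rewrite <- Derive_phi_slope. apply Derive_correct. eexists. apply phi_ode. Qed.

Lemma slope_quadratic u : slope u ^ 2 * B u + D ^ 2 * B u - 2 * c * slope u - 2 * cos th = 0.
Proof.
  pose proof (Derive_phi_sq u) as Hsq. rewrite Derive_phi_slope in Hsq.
  pose proof (B_pos u).
  apply (Rmult_eq_reg_r (B u)); [| lra]. nra.
Qed.

Lemma is_derive_B u : is_derive (fun t => B t) u
  (2 * (l2 ^ 2 - l1 ^ 2) * sin (phi u) * cos (phi u) * (c - slope u * B u)).
Proof.
  unfold BB at 1. auto_derive; [repeat split; eexists; apply is_derive_phi |].
  rewrite_Derive phi is_derive_phi. unfold BB. ring.
Qed.

Lemma ex_derive_slope u : ex_derive slope u.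
Proof.
  apply (ex_derive_ext (fun t => (c - sqrt (c ^ 2 + 2 * cos th * B t - D ^ 2 * B t ^ 2)) / B t)).
  { intros t. unfold slope. rewrite (is_derive_unique _ _ _ (phi_ode t)). reflexivity. }
  pose proof (B_pos u). pose proof (radicand_B_pos u).
  auto_derive; repeat split; try (eexists; apply is_derive_B); nra.
Qed.

(* Differentiating the identity [slope_quadratic] determines the derivative of [slope]. *)
Lemma is_derive_slope u : is_derive slope u
  ((l2 ^ 2 - l1 ^ 2) * sin (phi u) * cos (phi u) * (slope u ^ 2 + D ^ 2)).
Proof.
  destruct (ex_derive_slope u) as [ds Hds].
  set (dB := 2 * (l2 ^ 2 - l1 ^ 2) * sin (phi u) * cos (phi u) * (c - slope u * B u)).
  set (F t := slope t ^ 2 * B t + D ^ 2 * B t - 2 * c * slope t).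
  assert (HF0 : is_derive F u 0).
  { apply (is_derive_ext (fun _ => 2 * cos th)); [| apply (is_derive_const (2 * cos th))].
    intros t. unfold F. pose proof (slope_quadratic t). lra. }
  assert (HF : is_derive F u (2 * slope u * ds * B u + (slope u ^ 2 + D ^ 2) * dB - 2 * c * ds)).
  { unfold F. auto_derive.
    - repeat split; eexists; [apply Hds | apply is_derive_B | apply is_derive_B | apply Hds].
    - rewrite_Derive slope Hds. rewrite_Derive (BB l1 l2 phi) is_derive_B. unfold dB. ring. }
  apply is_derive_unique in HF0, HF. rewrite HF0 in HF. unfold dB in HF.
  pose proof (Derive_phi_pos u) as Hp. rewrite Derive_phi_slope in Hp.
  replace (_ * _ * _ * _) with ds; [exact Hds |].
  apply (Rmult_eq_reg_r (c - slope u * B u)); lra.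
Qed.

Lemma is_derive_G u : is_derive G u (slope u).
Proof.
  assert (Hcont : forall t, continuous slope t).
  { intros t. apply (ex_derive_continuous (V := R_NormedModule)), ex_derive_slope. }
  apply (is_derive_RInt slope G 0 u); [| apply Hcont].
  apply filter_forall. intros b. apply (RInt_correct (V := R_CompleteNormedModule)).
  apply (ex_RInt_continuous (V := R_CompleteNormedModule)). intros; apply Hcont.
Qed.

Local Notation A u v := (f u + c * v).

Definition a1 u v := D * sin (phi u) * cosh (A u v) + slope u * cos (phi u) * sinh (A u v).
Definition a2 u v := - D * cos (phi u) * cosh (A u v) + slope u * sin (phi u) * sinh (A u v).
Definition b1 u v := - D * cos (phi u) * sinh (A u v) + slope u * sin (phi u) * cosh (A u v).
Definition b2 u v := - D * sin (phi u) * sinh (A u v) - slope u * cos (phi u) * cosh (A u v).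

Definition W1 u v := (c * a2 u v / l1 - K * D * b2 u v / l2) / Lam.
Definition W2 u v := (K * D * b1 u v / l1 - c * a1 u v / l2) / Lam.
Definition x3 u v := - K * D * v + K * G u.

Definition Xe : surf := fun u v => twist (x3 u v) (W1 u v) (W2 u v).

Ltac exp_atoms u v :=
  unfold cosh, sinh in *; rewrite ?exp_Ropp in *;
  let e := fresh "e" in
  pose proof (exp_pos (A u v)); set (e := exp (A u v)) in *; clearbody e;
  let s := fresh "s" in set (s := slope u) in *; clearbody s.

Lemma Xsurf_eq : Xsurf l1 l2 c th phi f = Xe.
Proof.
  apply functional_extensionality; intros u. apply functional_extensionality; intros v.
  apply functional_extensionality; intros k.
  unfold Xsurf, Xe, twist, x3, W1, W2, a1, a2, b1, b2, mk3. cbv zeta beta iota.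
  rewrite (is_derive_unique _ _ _ (f_ode u)), Derive_phi_slope.
  pose proof (B_pos u). pose proof Lam_pos. pose proof l1_pos.
  exp_atoms u v.
  destruct k as [|[|k]]; [field; nonzero | field; nonzero | reflexivity].
Qed.

Ltac apply_atom_derive F :=
  first [ constr_eq F (fun x : R => phi x); apply is_derive_phi
        | constr_eq F (fun x : R => f x); apply f_ode
        | constr_eq F (fun x : R => G x); apply is_derive_G
        | constr_eq F (fun x : R => slope x); apply is_derive_slope ].

Ltac solve_ex_derive_atoms :=
  repeat split; eexists;
  lazymatch goal with |- is_derive ?F _ _ => apply_atom_derive F end.

Ltac rewrite_atom_Derive :=
  rewrite_Derive phi is_derive_phi; rewrite_Derive f f_ode;
  rewrite_Derive (GGf l1 l2 c phi) is_derive_G; rewrite_Derive slope is_derive_slope.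

(* Computes every [Derive] in the goal by [auto_derive], the derivatives of
   [phi], [f], [G] and [slope] being given by the lemmas above. *)
Ltac eval_Derive :=
  rewrite_atom_Derive;
  repeat (match goal with
          | |- context [Derive ?F ?x] =>
              let H := fresh in
              eassert (H : is_derive F x _)
                by (auto_derive; [solve_ex_derive_atoms | reflexivity]);
              rewrite (is_derive_unique F x _ H); clear H
          end; rewrite_atom_Derive).

Ltac derivable :=
  unfold W1, W2, a1, a2, b1, b2, cosh, sinh; auto_derive; solve_ex_derive_atoms.

Ltac surface_algebra u v :=
  pose proof l1_pos; pose proof Lam_pos;
  exp_atoms u v; unfold BB; rationalize_angle (phi u); field; nonzero.

Lemma is_derive_x3_u u v : is_derive (fun t => x3 t v) u (K * slope u).
Proof. unfold x3. auto_derive; [solve_ex_derive_atoms | rewrite_atom_Derive; ring]. Qed.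

Lemma is_derive_x3_v u v : is_derive (fun t => x3 u t) v (K * - D).
Proof. unfold x3. auto_derive; [trivial | ring]. Qed.

Lemma Xu_frame u v : Xu Xe u v = frame_vec l1 l2 (x3 u v) (a1 u v) (a2 u v) (slope u).
Proof.
  apply Xu_of_is_derive. intros k.
  replace (frame_vec l1 l2 (x3 u v) (a1 u v) (a2 u v) (slope u)) with
    (frame_vec l1 l2 (x3 u v) (l1 * (pu W1 u v - K * slope u * W2 u v))
       (l2 * (pu W2 u v + K * slope u * W1 u v)) (K * slope u / (l1 * l2))).
  - apply (is_derive_twist l1 l2 l1_pos l2_pos
             (fun t => x3 t v) (fun t => W1 t v) (fun t => W2 t v));
      [apply is_derive_x3_u | apply Derive_correct; derivable ..].
  - pose proof l1_pos. f_equal; [| | field; nonzero];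
      unfold pu, W1, W2, a1, a2, b1, b2; eval_Derive; surface_algebra u v.
Qed.

Lemma Xv_frame u v : Xv Xe u v = frame_vec l1 l2 (x3 u v) (b1 u v) (b2 u v) (- D).
Proof.
  apply Xv_of_is_derive. intros k.
  replace (frame_vec l1 l2 (x3 u v) (b1 u v) (b2 u v) (- D)) with
    (frame_vec l1 l2 (x3 u v) (l1 * (pv W1 u v - K * - D * W2 u v))
       (l2 * (pv W2 u v + K * - D * W1 u v)) (K * - D / (l1 * l2))).
  - apply (is_derive_twist l1 l2 l1_pos l2_pos
             (fun t => x3 u t) (fun t => W1 u t) (fun t => W2 u t));
      [apply is_derive_x3_v | apply Derive_correct; derivable ..].
  - pose proof l1_pos. f_equal; [| | field; nonzero];
      unfold pv, W1, W2, a1, a2, b1, b2; eval_Derive; surface_algebra u v.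
Qed.

Lemma Xuu_frame u v : Xuu Xe u v =
  frame_accel l1 l2 (x3 u v) (a1 u v) (a2 u v) (pu a1 u v) (pu a2 u v) (Derive slope u)
    (K * slope u).
Proof.
  change (Xuu Xe u v) with (Xu (Xu Xe) u v).
  replace (Xu Xe) with (fun u v => frame_vec l1 l2 (x3 u v) (a1 u v) (a2 u v) (slope u))
    by (do 2 (apply functional_extensionality; intro); symmetry; apply Xu_frame).
  apply Xu_of_is_derive.
  apply (is_derive_frame_vec l1 l2 l1_pos l2_pos
           (fun t => x3 t v) (fun t => a1 t v) (fun t => a2 t v) slope);
    [apply is_derive_x3_u | apply Derive_correct; derivable ..].
Qed.

Lemma Xvv_frame u v : Xvv Xe u v =
  frame_accel l1 l2 (x3 u v) (b1 u v) (b2 u v) (pv b1 u v) (pv b2 u v) 0 (K * - D).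
Proof.
  change (Xvv Xe u v) with (Xv (Xv Xe) u v).
  replace (Xv Xe) with (fun u v => frame_vec l1 l2 (x3 u v) (b1 u v) (b2 u v) (- D))
    by (do 2 (apply functional_extensionality; intro); symmetry; apply Xv_frame).
  apply Xv_of_is_derive.
  apply (is_derive_frame_vec l1 l2 l1_pos l2_pos
           (fun t => x3 u t) (fun t => b1 u t) (fun t => b2 u t) (fun _ => - D));
    [apply is_derive_x3_v | apply Derive_correct; derivable | apply Derive_correct; derivable
    | apply (is_derive_const (- D))].
Qed.

(* The harmonic map equation [nabla_u X_u + nabla_v X_v = 0], in the frame. *)
Lemma tension_free u v :
  pu a1 u v + conn1 l1 l2 (a1 u v) (a2 u v) (slope u) (a1 u v) (a2 u v) (slope u)
  = - (pv b1 u v + conn1 l1 l2 (b1 u v) (b2 u v) (- D) (b1 u v) (b2 u v) (- D)) /\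
  pu a2 u v + conn2 l1 l2 (a1 u v) (a2 u v) (slope u) (a1 u v) (a2 u v) (slope u)
  = - (pv b2 u v + conn2 l1 l2 (b1 u v) (b2 u v) (- D) (b1 u v) (b2 u v) (- D)) /\
  Derive slope u + conn3 l1 l2 (a1 u v) (a2 u v) (slope u) (a1 u v) (a2 u v) (slope u)
  = - (0 + conn3 l1 l2 (b1 u v) (b2 u v) (- D) (b1 u v) (b2 u v) (- D)).
Proof.
  unfold pu, pv, a1, a2, b1, b2, conn1, conn2, conn3, cosh, sinh.
  eval_Derive. repeat split; surface_algebra u v.
Qed.

Lemma Xe_first_form u v :
  EE (gE2 l1 l2) Xe u v = a1 u v ^ 2 + a2 u v ^ 2 + slope u ^ 2 /\
  GG (gE2 l1 l2) Xe u v = b1 u v ^ 2 + b2 u v ^ 2 + D ^ 2 /\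
  FF (gE2 l1 l2) Xe u v = a1 u v * b1 u v + a2 u v * b2 u v - slope u * D.
Proof.
  pose proof l1_pos. unfold EE, GG, FF. rewrite Xu_frame, Xv_frame.
  change (x3 u v) with (Xe u v 2%nat). rewrite !ip_frame_vec by assumption.
  repeat split; ring.
Qed.

Lemma Xe_conformal : conformal (gE2 l1 l2) Xe.
Proof.
  intros u v. destruct (Xe_first_form u v) as (-> & -> & ->).
  unfold a1, a2, b1, b2. split; surface_algebra u v.
Qed.

Lemma D_slope_pos u : 0 < D ^ 2 + slope u ^ 2.
Proof.
  destruct (Req_dec D 0) as [HD | HD]; [destruct (Req_dec (slope u) 0) as [Hs | Hs] |]; try nra.
  exfalso. pose proof (slope_quadratic u) as Hq. rewrite HD, Hs in Hq.
  assert (Hcos : cos th = 0) by lra.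
  assert (Hsin : sin th = 0).
  { unfold DD in HD. apply (Rmult_eq_reg_r (/ c)); [lra |]. apply Rinv_neq_0_compat. lra. }
  pose proof (cos_sin_sq th). rewrite Hcos, Hsin in *. lra.
Qed.

Lemma Xe_EE_pos u v : 0 < EE (gE2 l1 l2) Xe u v.
Proof.
  destruct (Xe_first_form u v) as (-> & _ & _).
  replace (a1 u v ^ 2 + a2 u v ^ 2 + slope u ^ 2) with (cosh (A u v) ^ 2 * (D ^ 2 + slope u ^ 2))
    by (unfold a1, a2; surface_algebra u v).
  apply Rmult_lt_0_compat; [apply pow_lt, cosh_pos | apply D_slope_pos].
Qed.

Lemma Xe_harmonic u v n : IIe (gE2 l1 l2) Xe u v n + IIg (gE2 l1 l2) Xe u v n = 0.
Proof.
  pose proof l1_pos. unfold IIe, IIg.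
  rewrite Xuu_frame, Xu_frame, Xvv_frame, Xv_frame. change (x3 u v) with (Xe u v 2%nat).
  rewrite !(cov_pair_frame l1 l2) by assumption.
  destruct (tension_free u v) as (-> & -> & ->). ring.
Qed.

Definition surface_leaf (g : R -> R) : Prop := g = phi \/ g = f \/ g = G \/ g = slope.

Ltac gen_smooth_tac :=
  unfold Rminus, Rdiv;
  first [ apply gen_const | apply gen_snd
        | apply gen_plus; gen_smooth_tac | apply gen_mult; gen_smooth_tac
        | apply gen_opp; gen_smooth_tac | apply gen_smooth_pow; gen_smooth_tac
        | apply gen_sin; gen_smooth_tac | apply gen_cos; gen_smooth_tac
        | apply gen_exp; gen_smooth_tac
        | apply gen_leaf; unfold surface_leaf;
          solve [repeat (left; reflexivity) || right; reflexivity] ].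

Lemma surface_leaf_derive g : surface_leaf g ->
  exists g', (forall u, is_derive g u (g' u)) /\ gen_smooth surface_leaf (fun u _ => g' u).
Proof.
  intros [-> | [-> | [-> | ->]]]; eexists; split;
    [apply is_derive_phi | | apply f_ode | | apply is_derive_G | | apply is_derive_slope |];
    unfold BB; gen_smooth_tac.
Qed.

Lemma Xe_smooth k : smooth2 (Defs.comp Xe k).
Proof.
  apply (gen_smooth_smooth2 surface_leaf surface_leaf_derive).
  unfold Defs.comp, Xe, twist, x3, W1, W2, a1, a2, b1, b2, cosh, sinh, mk3.
  destruct k as [|[|k]]; cbv beta iota; gen_smooth_tac.
Qed.

Lemma Xe_immersion : immersion Xe.
Proof.
  split.
  - intros k _. apply Xe_smooth.
  - intros u v al be.
    apply (conformal_immersive l1 l2);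
      [apply l1_pos | exact l2_pos | apply Xe_EE_pos | apply Xe_conformal ..].
Qed.

Definition normal_coords u v : vec3 :=
  mk3 (cos (phi u) / cosh (A u v)) (sin (phi u) / cosh (A u v)) (- sinh (A u v) / cosh (A u v)).

Lemma Xe_unit_normal u v :
  unit_normal (gE2 l1 l2) Xe u v (frame_comb l1 l2 (Xe u v) (normal_coords u v)).
Proof.
  pose proof l1_pos. rewrite frame_comb_frame_vec by assumption.
  unfold unit_normal. rewrite Xu_frame, Xv_frame. change (x3 u v) with (Xe u v 2%nat).
  rewrite !ip_frame_vec by assumption.
  unfold normal_coords, mk3, a1, a2, b1, b2. cbv beta iota.
  pose proof (cosh_pos (A u v)). repeat split; surface_algebra u v.
Qed.

Lemma Xe_gauss_map u v :
  1 + normal_coords u v 2%nat <> 0 /\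
  ((RtoC (normal_coords u v 0%nat) + RtoC (normal_coords u v 1%nat) * Ci)
     / RtoC (1 + normal_coords u v 2%nat))%C
  = (RtoC (exp (A u v)) * (RtoC (cos (phi u)) + RtoC (sin (phi u)) * Ci))%C.
Proof.
  pose proof (cosh_pos (A u v)).
  assert (H1N : 1 + normal_coords u v 2%nat = / exp (A u v) / cosh (A u v)).
  { unfold normal_coords, mk3. exp_atoms u v. field. nonzero. }
  pose proof (exp_pos (A u v)).
  assert (1 + normal_coords u v 2%nat <> 0).
  { rewrite H1N. apply Rgt_not_eq, Rdiv_lt_0_compat; [apply Rinv_0_lt_compat |]; assumption. }
  split; [assumption |].
  apply Cdiv_polar; [assumption | |]; rewrite H1N; unfold normal_coords, mk3; field; nonzero.
Qed.

End Surface.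

Theorem theorem5p1 (l1 l2 c th : R) (phi f : R -> R) :
  ((l1 > l2 /\ l2 > 0) \/ (l1 = 1 /\ l2 = 1)) ->
  in_Omega l1 c th ->
  (forall u, is_derive phi u
     (sqrt (c ^ 2 + 2 * cos th * BB l1 l2 phi u - DD c th ^ 2 * BB l1 l2 phi u ^ 2))) ->
  phi 0 = 0 ->
  (forall u, is_derive f u (DD c th * BB l1 l2 phi u)) ->
  f 0 = 0 ->
  let X := Xsurf l1 l2 c th phi f in
  immersion X /\ conformal (gE2 l1 l2) X /\ minimal (gE2 l1 l2) X /\
  exists N : R -> R -> vec3,
    forall u v,
      unit_normal (gE2 l1 l2) X u v (frame_comb l1 l2 (X u v) (N u v)) /\
      1 + N u v 2%nat <> 0 /\
      ((RtoC (N u v 0%nat) + RtoC (N u v 1%nat) * Ci) / RtoC (1 + N u v 2%nat))%C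
      = (RtoC (exp (f u + c * v)) * (RtoC (cos (phi u)) + RtoC (sin (phi u)) * Ci))%C.
Proof.
  (* The initial values [phi 0 = 0] and [f 0 = 0] only normalize the surface. *)
  intros Hl HOmega Hphi _ Hf _ X.
  assert (Hl2 : 0 < l2 /\ l2 <= l1) by (destruct Hl as [[? ?] | [-> ->]]; lra).
  destruct Hl2 as [Hl2 Hl12].
  pose proof (proj1 HOmega) as Hc.
  pose proof (in_Omega_cos_bound l1 c th ltac:(lra) HOmega) as Hth.
  unfold X. rewrite Xsurf_eq by assumption.
  split; [| split; [| split]].
  - apply Xe_immersion; assumption.
  - apply Xe_conformal; assumption.
  - intros u v n _.
    apply mean_curv_harmonic; [apply Xe_conformal; assumption .. | apply Xe_harmonic; assumption].
  - eexists. intros u v. split; [apply Xe_unit_normal | apply Xe_gauss_map]; assumption.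
Qed.
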